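(* Let $V$ be a Majorana algebra generated by a set $A$ of Majorana axes, and let $a_0, a_1 \in A$ with $\tau(a_1) = 1$. Then the vector $a_0^{\sigma(a_1)}$ satisfies axioms M3–M7 (with $a_0^{\sigma(a_1)}$ in place of $a$), and $\tau(a_0^{\sigma(a_1)}) = \tau(a_0)^{\sigma(a_1)}$, where $\tau(a_0)^{\sigma(a_1)} = \sigma(a_1)^{-1}\tau(a_0)\sigma(a_1)$.
   Context: Let $V$ be a real vector space with a positive definite symmetric bilinear form $(\,,\,)$ and a bilinear commutative (non-associative) product $\cdot$ such that (M1) $(u, v\cdot w) = (u\cdot v, w)$ for all $u,v,w\in V$, and (M2) $(u\cdot u, v\cdot v)\ge (u\cdot v, u\cdot v)$ for all $u,v \in V$. For $a \in V$ and $\mu \in \mathbb{R}$ write $V_\mu^{(a)} = \{v \in V : a\cdot v = \mu v\}$. A nonzero $a\in V$ is said to satisfy axioms M3–M7 if: (M3) $(a,a)=1$ and $a\cdot a = a$; (M4) $V = V_1^{(a)}\oplus V_0^{(a)}\oplus V_{1/4}^{(a)} \oplus V_{1/32}^{(a)}$; (M5) $V_1^{(a)} = \mathbb{R}a$; (M6) the linear map $\tau(a)$ of $V$ acting as $+1$ on $V_1^{(a)}\oplus V_0^{(a)}\oplus V_{1/4}^{(a)}$ and as $-1$ on $V_{1/32}^{(a)}$ preserves the algebra product; (M7) on $V_+^{(a)} := V_1^{(a)}\oplus V_0^{(a)}\oplus V_{1/4}^{(a)}$, the linear map $\sigma(a)$ acting as $+1$ on $V_1^{(a)}\oplus V_0^{(a)}$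 and as $-1$ on $V_{1/4}^{(a)}$ preserves the restriction of the algebra product to $V_+^{(a)}$. Elements satisfying M3–M7 are called Majorana axes, and $\tau(a)$ the Majorana involution of $a$. A Majorana algebra is such a $V$ (satisfying M1, M2) that is generated as an algebra by a set $A$ of Majorana axes. Linear maps act on the right: $u^{g}$ denotes the image of $u$ under $g$. *)

From HB Require Import structures.
From mathcomp Require Import all_boot all_order all_algebra.
From mathcomp Require Import reals.
Set Implicit Arguments. Unset Strict Implicit. Unset Printing Implicit Defensive.
Import Order.TTheory GRing.Theory Num.Theory.
Local Open Scope ring_scope.

Section Majorana.
Variables (R : realType) (V : lmodType R).
Variables (form : V -> V -> R) (mul : V -> V -> V).

Definition form_ok : Prop :=
  [/\ (forall x y z, form (x + y) z = form x z + form y z),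
      (forall (k : R) x z, form (k *: x) z = k * form x z),
      (forall x y, form x y = form y x) &
      (forall x, x != 0 -> 0 < form x x)].

Definition mul_ok : Prop :=
  [/\ (forall x y z, mul (x + y) z = mul x z + mul y z),
      (forall (k : R) x z, mul (k *: x) z = k *: mul x z) &
      (forall x y, mul x y = mul y x)].

Definition M1 : Prop := forall u v w, form u (mul v w) = form (mul u v) w.
Definition M2 : Prop :=
  forall u v, form (mul u u) (mul v v) >= form (mul u v) (mul u v).

Definition eig (a : V) (mu : R) (v : V) : Prop := mul a v = mu *: v.

Definition Vplus (a v : V) : Prop :=
  exists x y z, [/\ eig a 1 x, eig a 0 y, eig a (1/4) z & v = x + y + z].

Definition V10 (a v : V) : Prop :=
  exists x y, [/\ eig a 1 x, eig a 0 y & v = x + y].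

Definition is_tau (a : V) (t : V -> V) : Prop :=
  [/\ (forall x y, t (x + y) = t x + t y),
      (forall (k : R) x, t (k *: x) = k *: t x),
      (forall x, Vplus a x -> t x = x) &
      (forall x, eig a (1/32) x -> t x = - x)].

(* s is the map sigma(a) on V_+^(a) (values outside V_+^(a) irrelevant):
   linear on V_+^(a), +1 on V_1 (+) V_0, -1 on V_{1/4}. *)
Definition is_sigma_on_Vplus (a : V) (s : V -> V) : Prop :=
  [/\ (forall x y, Vplus a x -> Vplus a y -> s (x + y) = s x + s y),
      (forall (k : R) x, Vplus a x -> s (k *: x) = k *: s x),
      (forall x, V10 a x -> s x = x) &
      (forall x, eig a (1/4) x -> s x = - x)].

(* s is sigma(a) as a linear map of the whole of V (meaningful when
   V = V_+^(a), e.g. when tau(a) = 1). *)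
Definition is_sigma (a : V) (s : V -> V) : Prop :=
  [/\ (forall x y, s (x + y) = s x + s y),
      (forall (k : R) x, s (k *: x) = k *: s x),
      (forall x, V10 a x -> s x = x) &
      (forall x, eig a (1/4) x -> s x = - x)].

Definition M3 (a : V) : Prop := form a a = 1 /\ mul a a = a.

(* V = V_1 (+) V_0 (+) V_{1/4} (+) V_{1/32} (direct sum: existence and
   uniqueness of the decomposition) *)
Definition M4 (a : V) : Prop :=
  forall v, exists x1 x0 x4 x32,
    [/\ eig a 1 x1, eig a 0 x0, eig a (1/4) x4, eig a (1/32) x32 &
        v = x1 + x0 + x4 + x32] /\
        forall y1 y0 y4 y32,
          eig a 1 y1 -> eig a 0 y0 -> eig a (1/4) y4 -> eig a (1/32) y32 ->
          v = y1 + y0 + y4 + y32 ->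
          [/\ y1 = x1, y0 = x0, y4 = x4 & y32 = x32].

Definition M5 (a : V) : Prop := forall v, eig a 1 v -> exists k : R, v = k *: a.

Definition M6 (a : V) : Prop :=
  exists t, is_tau a t /\ forall u v, t (mul u v) = mul (t u) (t v).

Definition M7 (a : V) : Prop :=
  exists s, is_sigma_on_Vplus a s /\
    forall u v, Vplus a u -> Vplus a v -> s (mul u v) = mul (s u) (s v).

Definition axioms_M3_M7 (a : V) : Prop := [/\ M3 a, M4 a, M5 a, M6 a & M7 a].

Definition majorana_axis (a : V) : Prop := a != 0 /\ axioms_M3_M7 a.

Definition generates (A : V -> Prop) : Prop :=
  forall W : V -> Prop,
    W 0 -> (forall x y, W x -> W y -> W (x + y)) ->
    (forall (k : R) x, W x -> W (k *: x)) ->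
    (forall x y, W x -> W y -> W (mul x y)) ->
    (forall a, A a -> W a) -> forall v, W v.

Definition majorana_algebra (A : V -> Prop) : Prop :=
  [/\ form_ok /\ mul_ok, M1, M2, (forall a, A a -> majorana_axis a) & generates A].

End Majorana.

(** If [tau(a1)] is trivial, [V] has no [1/32]-eigenvectors for [a1], so
    [sigma(a1)] is defined on all of [V]; by M7 it is then an
    involutive algebra automorphism, and it is an isometry because the
    eigenspaces of [a1] are orthogonal (M1).  Every axiom M3-M7 is invariant
    under such an automorphism [g], the Majorana involution being transported
    to [g tau g^-1]; that involution is unique by M4. *)
From HB Require Import structures.
From mathcomp Require Import all_boot all_order all_algebra.
From mathcomp Require Import reals.
From mathcomp Require Import lra.
Set Implicit Arguments. Unset Strict Implicit. Unset Printing Implicit Defensive.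
Import Order.TTheory GRing.Theory Num.Theory.
Local Open Scope ring_scope.

Lemma scalable_funN (R : realType) (U W : lmodType R) (f : U -> W) x :
  (forall (k : R) y, f (k *: y) = k *: f y) -> f (- x) = - f x.
Proof. by move=> fZ; rewrite -scaleN1r fZ scaleN1r. Qed.

Lemma lmod_eqN_eq0 (R : realType) (V : lmodType R) (x : V) : x = - x -> x = 0.
Proof.
move=> xNx; apply/eqP; have : (2 : R) *: x == 0 by rewrite scaler_nat mulr2n {2}xNx subrr.
by rewrite scaler_eq0 pnatr_eq0.
Qed.

Section MajoranaAlgebra.
Variables (R : realType) (V : lmodType R) (form : V -> V -> R) (mul : V -> V -> V).
Hypotheses (amulZl : forall (k : R) x z, mul (k *: x) z = k *: mul x z)
           (amulC : forall x y, mul x y = mul y x).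
Hypotheses (formDl : forall x y z, form (x + y) z = form x z + form y z)
           (formZl : forall (k : R) x z, form (k *: x) z = k * form x z)
           (formC : forall x y, form x y = form y x)
           (formM : M1 form mul).

Lemma amulr0 x : mul x 0 = 0.
Proof. by rewrite amulC -(scale0r 0) amulZl !scale0r. Qed.

Lemma eig0 a mu : eig mul a mu 0.
Proof. by rewrite /eig amulr0 scaler0. Qed.

Lemma eigN a mu x : eig mul a mu x -> eig mul a mu (- x).
Proof.
rewrite /eig => ax; rewrite -scaleN1r amulC amulZl amulC ax.
by rewrite scalerA mulrC -scalerA scaleN1r.
Qed.

Lemma formDr x y z : form z (x + y) = form z x + form z y.
Proof. by rewrite formC formDl !(formC z). Qed.

Lemma formNl x z : form (- x) z = - form x z.
Proof. by rewrite -scaleN1r formZl mulN1r. Qed.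

Lemma formNr x z : form z (- x) = - form z x.
Proof. by rewrite formC formNl formC. Qed.

Lemma eig_form_orthogonal a (l m : R) x y :
  eig mul a l x -> eig mul a m y -> l != m -> form x y = 0.
Proof.
move=> ex ey lm.
have := formM x a y; rewrite ey (amulC x a) ex formZl (formC x) formZl (formC y) => /eqP.
by rewrite -subr_eq0 -mulrBl mulf_eq0 subr_eq0 eq_sym (negbTE lm) => /eqP.
Qed.

Lemma V10_eig14_orthogonal a p z : V10 mul a p -> eig mul a (1/4) z -> form p z = 0.
Proof.
case=> [x1 [x0 [e1 e0 ->]]] ez.
rewrite formDl (eig_form_orthogonal e1 ez) ?(eig_form_orthogonal e0 ez) ?addr0 //.
all: by apply/eqP; lra.
Qed.

Lemma tau_unique a t t' : M4 mul a -> is_tau mul a t -> is_tau mul a t' ->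
  forall v, t v = t' v.
Proof.
move=> M4a [tD _ tP t32] [t'D _ t'P t'32] v.
have [x1 [x0 [x4 [x32 [[e1 e0 e4 e32 ->] _]]]]] := M4a v.
have Vx : Vplus mul a (x1 + x0 + x4) by exists x1, x0, x4.
by rewrite tD t'D tP // t'P // t32 // t'32.
Qed.

Section Automorphism.
Variables (g h : V -> V).
Hypotheses (gK : cancel g h) (hK : cancel h g)
           (gD : forall x y, g (x + y) = g x + g y)
           (gZ : forall (k : R) x, g (k *: x) = k *: g x)
           (gM : forall x y, g (mul x y) = mul (g x) (g y)).

Let g_inj : injective g := can_inj gK.

Lemma inv_aut_additive x y : h (x + y) = h x + h y.
Proof. by apply: g_inj; rewrite gD !hK. Qed.

Lemma inv_aut_scalable (k : R) x : h (k *: x) = k *: h x.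
Proof. by apply: g_inj; rewrite gZ !hK. Qed.

Lemma inv_aut_multiplicative x y : h (mul x y) = mul (h x) (h y).
Proof. by apply: g_inj; rewrite gM !hK. Qed.

Lemma eig_aut a mu w : eig mul (g a) mu w <-> eig mul a mu (h w).
Proof.
rewrite /eig; split=> [aw | aw].
  by rewrite -{1}(gK a) -inv_aut_multiplicative aw inv_aut_scalable.
by apply: (can_inj hK); rewrite inv_aut_multiplicative gK aw inv_aut_scalable.
Qed.

Lemma Vplus_aut a x : Vplus mul (g a) x -> Vplus mul a (h x).
Proof.
case=> [y1 [y0 [y4 [e1 e0 e4 ->]]]].
by exists (h y1), (h y0), (h y4); rewrite !inv_aut_additive; split=> //; apply/eig_aut.
Qed.

Lemma V10_aut a x : V10 mul (g a) x -> V10 mul a (h x).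
Proof.
case=> [y1 [y0 [e1 e0 ->]]].
by exists (h y1), (h y0); rewrite inv_aut_additive; split=> //; apply/eig_aut.
Qed.

Lemma is_tau_aut a t : is_tau mul a t -> is_tau mul (g a) (fun x => g (t (h x))).
Proof.
case=> tD tZ tP t32; split.
- by move=> x y; rewrite inv_aut_additive tD gD.
- by move=> k x; rewrite inv_aut_scalable tZ gZ.
- by move=> x /Vplus_aut Vx; rewrite tP.
- by move=> x /eig_aut ex; rewrite t32 // (scalable_funN _ gZ) hK.
Qed.

Lemma M3_aut a : (forall u v, form (g u) (g v) = form u v) ->
  M3 form mul a -> M3 form mul (g a).
Proof. by move=> gF [aa1 aaa]; split; rewrite ?gF // -gM aaa. Qed.

Lemma M4_aut a : M4 mul a -> M4 mul (g a).
Proof.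
move=> M4a v; have [x1 [x0 [x4 [x32 [[e1 e0 e4 e32 hv] uniq_x]]]]] := M4a (h v).
have eig_g mu x : eig mul a mu x -> eig mul (g a) mu (g x) by move=> ?; apply/eig_aut; rewrite gK.
exists (g x1), (g x0), (g x4), (g x32); split.
  by split; try exact: eig_g; rewrite -!gD -hv hK.
move=> y1 y0 y4 y32 /eig_aut f1 /eig_aut f0 /eig_aut f4 /eig_aut f32 vy.
have [|<- <- <- <-] := uniq_x _ _ _ _ f1 f0 f4 f32; first by rewrite vy !inv_aut_additive.
by rewrite !hK.
Qed.

Lemma M5_aut a : M5 mul a -> M5 mul (g a).
Proof. by move=> M5a v /eig_aut /M5a [k hv]; exists k; rewrite -(hK v) hv gZ. Qed.

Lemma M6_aut a : M6 mul a -> M6 mul (g a).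
Proof.
case=> t [taut tM]; exists (fun x => g (t (h x))); split; first exact: is_tau_aut.
by move=> u v; rewrite inv_aut_multiplicative tM gM.
Qed.

Lemma M7_aut a : M7 mul a -> M7 mul (g a).
Proof.
case=> s [[sD sZ s10 s4] sM]; exists (fun x => g (s (h x))); split.
  split.
  - by move=> x y /Vplus_aut Vx /Vplus_aut Vy; rewrite inv_aut_additive sD // gD.
  - by move=> k x /Vplus_aut Vx; rewrite inv_aut_scalable sZ // gZ.
  - by move=> x /V10_aut Vx; rewrite s10.
  - by move=> x /eig_aut ex; rewrite s4 // (scalable_funN _ gZ) hK.
by move=> u v /Vplus_aut Vu /Vplus_aut Vv; rewrite inv_aut_multiplicative sM // gM.
Qed.

Lemma axioms_M3_M7_aut a : (forall u v, form (g u) (g v) = form u v) ->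
  axioms_M3_M7 form mul a -> axioms_M3_M7 form mul (g a).
Proof.
move=> gF [M3a M4a M5a M6a M7a].
by split; [exact: M3_aut | exact: M4_aut | exact: M5_aut | exact: M6_aut | exact: M7_aut].
Qed.

End Automorphism.

Lemma sigma_on_Vplus_decomp a s x1 x0 x4 : is_sigma_on_Vplus mul a s ->
  eig mul a 1 x1 -> eig mul a 0 x0 -> eig mul a (1/4) x4 ->
  s (x1 + x0 + x4) = x1 + x0 - x4.
Proof.
move=> [sD _ s10 s4] e1 e0 e4.
have V10x : V10 mul a (x1 + x0) by exists x1, x0.
rewrite sD ?(s4 x4) ?s10 //; first by exists x1, x0, 0; rewrite addr0; split=> //; apply: eig0.
by exists 0, 0, x4; rewrite !add0r; split=> //; apply: eig0.
Qed.

Lemma is_sigma_on_Vplus_sigma a s : is_sigma mul a s -> is_sigma_on_Vplus mul a s.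
Proof. by case=> sD sZ s10 s4; split. Qed.

Section TrivialTau.
Variables (a : V) (s : V -> V).
Hypotheses (M4a : M4 mul a) (M6a : M6 mul a)
           (tau_id : forall t, is_tau mul a t -> forall v, t v = v)
           (sigma_s : is_sigma mul a s).

Lemma trivial_tau_eig32 x : eig mul a (1/32) x -> x = 0.
Proof.
have [t [taut _]] := M6a; have [_ _ _ t32] := taut.
by move=> ex; apply: lmod_eqN_eq0; rewrite -{1}(tau_id taut x) t32.
Qed.

Lemma trivial_tau_Vplus v : Vplus mul a v.
Proof.
have [x1 [x0 [x4 [x32 [[e1 e0 e4 e32 ->] _]]]]] := M4a v.
by exists x1, x0, x4; rewrite (trivial_tau_eig32 e32) addr0.
Qed.

Lemma sigma_decomp x1 x0 x4 :
  eig mul a 1 x1 -> eig mul a 0 x0 -> eig mul a (1/4) x4 ->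
  s (x1 + x0 + x4) = x1 + x0 - x4.
Proof. exact/sigma_on_Vplus_decomp/is_sigma_on_Vplus_sigma. Qed.

Lemma sigma_involutive : involutive s.
Proof.
move=> v; have [x1 [x0 [x4 [e1 e0 e4 ->]]]] := trivial_tau_Vplus v.
by rewrite !sigma_decomp ?opprK //; apply: eigN.
Qed.

Lemma sigma_multiplicative : M7 mul a -> forall u v, s (mul u v) = mul (s u) (s v).
Proof.
case=> s' [sigma_s' s'M].
have s's v : s' v = s v.
  have [x1 [x0 [x4 [e1 e0 e4 ->]]]] := trivial_tau_Vplus v.
  by rewrite sigma_decomp // (sigma_on_Vplus_decomp sigma_s').
by move=> u v; rewrite -!s's s'M //; apply: trivial_tau_Vplus.
Qed.

Lemma sigma_isometry u v : form (s u) (s v) = form u v.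
Proof.
have [x1 [x0 [x4 [e1 e0 e4 ->]]]] := trivial_tau_Vplus u.
have [y1 [y0 [y4 [f1 f0 f4 ->]]]] := trivial_tau_Vplus v.
rewrite !sigma_decomp //.
have pq : form (x1 + x0) y4 = 0 by apply: (V10_eig14_orthogonal _ f4); exists x1, x0.
have qp : form x4 (y1 + y0) = 0.
  by rewrite formC; apply: (V10_eig14_orthogonal _ e4); exists y1, y0.
move: pq qp; set p := x1 + x0; set q := y1 + y0; clearbody p q => pq qp.
by rewrite !formDl !formDr !formNl !formNr pq qp !(oppr0, subr0, sub0r, addr0, add0r, opprK).
Qed.

End TrivialTau.

End MajoranaAlgebra.

Theorem mainTheorem1 (R : realType) (V : lmodType R)
    (form : V -> V -> R) (mul : V -> V -> V) (A : V -> Prop)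
    (HV : majorana_algebra form mul A)
    (a0 a1 : V) (Ha0 : A a0) (Ha1 : A a1)
    (Htau1 : forall t, is_tau mul a1 t -> forall v, t v = v)
    (s : V -> V) (Hs : is_sigma mul a1 s)
    (t0 : V -> V) (Ht0 : is_tau mul a0 t0) :
  axioms_M3_M7 form mul (s a0) /\
  (forall t, is_tau mul (s a0) t -> forall v, t (s v) = s (t0 v)).
Proof.
case: HV => [[[formDl formZl formC _] [_ amulZl amulC]] formM _ axes _].
have [_ [_ M4a1 _ M6a1 M7a1]] := axes a1 Ha1.
have [_ axioms_a0] := axes a0 Ha0.
have [sD sZ _ _] := Hs.
have sK := sigma_involutive amulZl amulC M4a1 M6a1 Htau1 Hs.
have sM := sigma_multiplicative amulZl amulC M4a1 M6a1 Htau1 Hs M7a1.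
have sF := sigma_isometry amulZl amulC formDl formZl formC formM M4a1 M6a1 Htau1 Hs.
have axioms_sa0 := axioms_M3_M7_aut sK sK sD sZ sM sF axioms_a0.
split=> // t taut v; have [_ M4sa0 _ _ _] := axioms_sa0.
by rewrite (tau_unique M4sa0 taut (is_tau_aut sK sK sD sZ sM Ht0)) sK.
Qed.
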